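(* Consider a time-varying graph based on continuous time intervals with $n$ nodes and $m$ edges, where the presence of the edges is specified by a total of $\eta$ continuous time intervals. Then it can be represented as a time-varying graph $H=(V,E,T)$ (with $E\subseteq V\times T\times V\times T$), using only spatial and temporal dynamic edges, with $|E|=O(\eta^2)$ dynamic edges.
   Context: A continuous-time-interval TVG consists of nodes and edges, each edge $\{u,v\}$ being present during a finite union of time intervals $(a,b]\subset\mathbb{R}^+$ of non-zero finite length; $\eta$ is the total number of such intervals over all edges. In the discrete model $H=(V,E,T)$, $V$ is a finite node set, $T$ a finite set of time instants, and a dynamic edge $(u,t_a,v,t_b)\in E$ is a directed edge from node $u$ at time $t_a$ to node $v$ at time $t_b$. A spatial edge has the form $(u,t_a,v,t_a)$ with $u\neq v$; a temporal edge has the form $(u,t_a,u,t_b)$ with $t_a\neq t_b$. The representation takes $T$ to be the set of endpoints of all intervals; for each interval $(a,b]$ of an edge $\{u,v\}$, spatial edges connect $u$ and $v$ at the time instants of $T$ in $[a,b]$, and temporal edges connect $u$ (resp. $v$) between successive such time instants, so that the presence of the edge over the whole interval is encoded. *)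

From HB Require Import structures.
From mathcomp Require Import all_boot all_order all_algebra.
From mathcomp Require Import reals.
Set Implicit Arguments. Unset Strict Implicit. Unset Printing Implicit Defensive.
Import Order.TTheory GRing.Theory Num.Theory.
Local Open Scope ring_scope.

(* A continuous-time-interval TVG over node set V is given by the list of its
   presence intervals: an entry (u, v, a, b) says that the (undirected) edge
   {u,v} is present during the time interval (a, b].  eta = size of the list. *)
Definition interval_tvg (R : realType) (V : finType) := seq (V * V * R * R).

Definition wf_tvg (R : realType) (V : finType) (G : interval_tvg R V) : Prop :=
  uniq G /\
  (forall u v a b, (u, v, a, b) \in G -> [/\ u != v, 0 <= a & a < b]) /\
  (forall u v a b, (u, v, a, b) \in G -> (v, u, a, b) \notin G).

Definition eta (R : realType) (V : finType) (G : interval_tvg R V) : nat := size G.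

Definition in_T (R : realType) (V : finType) (G : interval_tvg R V) (t : R) : Prop :=
  exists u v a b, (u, v, a, b) \in G /\ (t = a \/ t = b).

Definition spatial_edge (R : realType) (V : finType) (G : interval_tvg R V)
  (e : V * R * V * R) : Prop :=
  let: (x, t, y, t') := e in
  t = t' /\ in_T G t /\
  exists u v a b, (u, v, a, b) \in G /\ a <= t <= b /\
    ((x = u /\ y = v) \/ (x = v /\ y = u)).

Definition temporal_edge (R : realType) (V : finType) (G : interval_tvg R V)
  (e : V * R * V * R) : Prop :=
  let: (x, t, x', t') := e in
  x = x' /\ in_T G t /\ in_T G t' /\ t < t' /\
  (forall s, in_T G s -> ~ (t < s < t')) /\
  exists u v a b, (u, v, a, b) \in G /\ (x = u \/ x = v) /\
    a <= t <= b /\ a <= t' <= b.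

Definition dyn_edge (R : realType) (V : finType) (G : interval_tvg R V)
  (e : V * R * V * R) : Prop :=
  spatial_edge G e \/ temporal_edge G e.

From mathcomp Require Import all_boot all_order all_algebra.
From mathcomp Require Import reals boolp zify.
Set Implicit Arguments. Unset Strict Implicit. Unset Printing Implicit Defensive.
Import Order.TTheory GRing.Theory Num.Theory.
Local Open Scope ring_scope.

(* Every dynamic edge is drawn from finitely many candidates built from the
   2 eta interval endpoints and the 2 eta interval end nodes.  A spatial edge
   (x,t,y,t) is fixed by an oriented interval edge (x,y) and an instant t, so
   there are at most 2 eta * 2 eta of them.  A temporal edge (x,t,x,t') is
   fixed by its source (x,t), because t' must be the successor of t in T; so
   there are at most 2 eta * 2 eta of them as well, and |E| <= 8 eta^2. *)

Lemma size_uniq_le_split (T U : eqType) (P : pred T) (f : T -> U)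
    (l s : seq T) (r : seq U) :
  uniq l ->
  {in l, forall e, P e -> e \in s} ->
  {in l, forall e, ~~ P e -> f e \in r} ->
  {in [seq e <- l | ~~ P e] &, injective f} ->
  (size l <= size s + size r)%N.
Proof.
move=> uniq_l l_s l_r f_inj.
rewrite -(count_predC P) leq_add //; rewrite -size_filter.
  apply: uniq_leq_size; first exact: filter_uniq.
  by move=> e; rewrite mem_filter => /andP[Pe /l_s]; apply.
rewrite -(size_map f); apply: uniq_leq_size.
  by rewrite map_inj_in_uniq ?filter_uniq.
move=> y /mapP[e]; rewrite mem_filter => /andP[nPe le] ->.
exact: l_r le nPe.
Qed.

Section Candidates.

Variables (R : realType) (V : finType) (G : interval_tvg R V).

Definition endpoints : seq R := [seq q.1.2 | q <- G] ++ [seq q.2 | q <- G].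

Definition end_nodes : seq V := [seq q.1.1.1 | q <- G] ++ [seq q.1.1.2 | q <- G].

Definition oriented_edges : seq (V * V) :=
  [seq (q.1.1.1, q.1.1.2) | q <- G] ++ [seq (q.1.1.2, q.1.1.1) | q <- G].

Definition node_instants : seq (V * R) :=
  [seq (x, t) | x <- end_nodes, t <- endpoints].

Definition spatial_candidates : seq (V * R * V * R) :=
  [seq (p.1, t, p.2, t) | p <- oriented_edges, t <- endpoints].

Definition temporal_candidates : seq (V * R * V * R) :=
  [seq (p.1, p.2, p.1, t') | p <- node_instants, t' <- endpoints].

Definition source (e : V * R * V * R) : V * R := (e.1.1.1, e.1.1.2).

Lemma size_spatial_candidates :
  size spatial_candidates = (4 * eta G ^ 2)%N.
Proof. rewrite size_allpairs !size_cat !size_map /eta; lia. Qed.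

Lemma size_node_instants : size node_instants = (4 * eta G ^ 2)%N.
Proof. rewrite size_allpairs !size_cat !size_map /eta; lia. Qed.

Lemma in_T_endpoints t : in_T G t -> t \in endpoints.
Proof.
move=> [u [v [a [b [uvab [->|->]]]]]]; rewrite mem_cat.
  by rewrite (map_f (fun q => q.1.2) uvab).
by rewrite (map_f (fun q => q.2) uvab) orbT.
Qed.

Lemma interval_end_nodes u v a b x :
  (u, v, a, b) \in G -> x = u \/ x = v -> x \in end_nodes.
Proof.
move=> uvab [->|->]; rewrite mem_cat.
  by rewrite (map_f (fun q => q.1.1.1) uvab).
by rewrite (map_f (fun q => q.1.1.2) uvab) orbT.
Qed.

Lemma interval_oriented_edges u v a b x y :
  (u, v, a, b) \in G -> (x = u /\ y = v) \/ (x = v /\ y = u) ->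
  (x, y) \in oriented_edges.
Proof.
move=> uvab [[-> ->]|[-> ->]]; rewrite mem_cat.
  by rewrite (map_f (fun q => (q.1.1.1, q.1.1.2)) uvab).
by rewrite (map_f (fun q => (q.1.1.2, q.1.1.1)) uvab) orbT.
Qed.

Lemma spatial_edge_candidate e : spatial_edge G e -> e \in spatial_candidates.
Proof.
case: e => [[[x t] y] _] [<- [/in_T_endpoints Tt [u [v [a [b [uvab [_ xy]]]]]]]].
exact: (allpairs_f (fun p t => (p.1, t, p.2, t))
          (interval_oriented_edges uvab xy) Tt).
Qed.

Lemma temporal_edge_source e : temporal_edge G e -> source e \in node_instants.
Proof.
case: e => [[[x t] y] t'] [_ [/in_T_endpoints Tt [_ [_ [_ [u [v [a [b [uvab [x_uv _]]]]]]]]]]].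
exact: (allpairs_f pair (interval_end_nodes uvab x_uv) Tt).
Qed.

Lemma temporal_edge_candidate e : temporal_edge G e -> e \in temporal_candidates.
Proof.
move=> /[dup] /temporal_edge_source src.
case: e src => [[[x t] y] t'] src [<- [_ [/in_T_endpoints Tt' _]]].
exact: (allpairs_f (fun p t' => (p.1, p.2, p.1, t')) src Tt').
Qed.

Lemma temporal_edge_source_inj e1 e2 :
  temporal_edge G e1 -> temporal_edge G e2 -> source e1 = source e2 -> e1 = e2.
Proof.
case: e1 e2 => [[[x1 t1] y1] t1'] [[[x2 t2] y2] t2'] /=.
move=> + + [ex et]; subst x2 t2.
move=> [<- [_ [Tt1 [tt1 [succ1 _]]]]] [<- [_ [Tt2 [tt2 [succ2 _]]]]].
case: (ltgtP t1' t2') => [t12|t21|-> //].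
  by case: (succ2 t1' Tt1); rewrite tt1 t12.
by case: (succ1 t2' Tt2); rewrite tt2 t21.
Qed.

Lemma dyn_edge_candidate e :
  dyn_edge G e -> e \in spatial_candidates ++ temporal_candidates.
Proof.
rewrite mem_cat => -[/spatial_edge_candidate -> // | /temporal_edge_candidate ->].
exact: orbT.
Qed.

End Candidates.

Theorem proposition1 :
  exists C : nat,
    forall (R : realType) (V : finType) (G : interval_tvg R V),
      wf_tvg G ->
      exists l : seq (V * R * V * R),
        uniq l /\
        (forall e, e \in l <-> dyn_edge G e) /\
        (size l <= C * (eta G) ^ 2)%N.
Proof.
exists 8%N => R V G _.
set l := undup [seq e <- spatial_candidates G ++ temporal_candidates G
               | `[< dyn_edge G e >]].
have mem_l e : e \in l <-> dyn_edge G e.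
  rewrite mem_undup mem_filter; split; first by case/andP => /asboolP.
  by move=> Ee; rewrite asboolT //= dyn_edge_candidate.
exists l; split; first exact: undup_uniq.
split=> //.
have temporal e : e \in l -> ~~ `[< spatial_edge G e >] -> temporal_edge G e.
  by move=> /mem_l[Se /negP[]|//]; apply/asboolP.
apply: leq_trans (size_uniq_le_split (P := fun e => `[< spatial_edge G e >])
  (f := @source R V) (s := spatial_candidates G) (r := node_instants G)
  (undup_uniq _) _ _ _) _.
- by move=> e _ /asboolP /spatial_edge_candidate.
- by move=> e l_e /(temporal _ l_e) /temporal_edge_source.
- move=> e1 e2; rewrite !mem_filter => /andP[n1 l1] /andP[n2 l2].
  by apply: temporal_edge_source_inj; [exact: temporal l1 n1 | exact: temporal l2 n2].
- by rewrite size_spatial_candidates size_node_instants -mulnDl.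
Qed.
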